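(* Let $\mathbf{I}$ be a $d$-system of ideals in a ring $R$, $A:=\mathscr{A}(R,\mathbf{I})$, $B:=\mathscr{A}(R^{\mathrm{op}},\mathring{\mathbf{I}})$, and identify $A$ and $B$ with their (faithful) images in $\mathrm{End}_{\mathbb{Z}}(\mathbb{T})$. Then $\mathrm{End}_A(\mathbb{T})=B$ and $\mathrm{End}_B(\mathbb{T})=A$.
   Context: A $d$-system of ideals in $R$ is a collection $\{I_{ij}\mid1\le i,j\le d+1\}$ of two-sided ideals with $I_{ij}I_{jk}\subset I_{ik}$ and $I_{ij}=R$ for $i\ge j$. $\mathscr{A}(R,\mathbf{I}):=\bigoplus_{1\le i,j\le d}X_{ij}$, $X_{ij}:=I_{ij}/I_{i,d+1}$, with multiplication $(x+I_{i,d+1})(y+I_{k,d+1})=\delta_{jk}(xy+I_{i,d+1})\in X_{il}$ for $x\in I_{ij},y\in I_{kl}$. The dual system in $R^{\mathrm{op}}$ is $\mathring{I}_{ij}:=I_{d+2-j,d+2-i}$, so that the $(i,j)$ component of $B$ is $I_{d+2-j,d+2-i}/I_{1,d+2-i}$. Define $\mathbb{T}_{kl}:=R/I_{k,d+2-l}$ for $1\le k,l\le d$ and $\mathbb{T}:=\bigoplus_{k,l}\mathbb{T}_{kl}$. $A$ acts on $\mathbb{T}$ by $(x+I_{i,d+1})\cdot(r+I_{k,d+2-l})=\delta_{jk}(xr+I_{i,d+2-l})\in\mathbb{T}_{il}$ for $x\in I_{ij}$, $r\in R$; $B$ acts by $(x+I_{1,d+2-i})\cdot(r+I_{k,d+2-l})=\delta_{jl}(rx+I_{k,d+2-i})\in\mathbb{T}_{ki}$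 for $x\in I_{d+2-j,d+2-i}$, $r\in R$. These actions are well defined, commute, and are faithful. *)

From HB Require Import structures.
From mathcomp Require Import all_boot all_order all_algebra.
Set Implicit Arguments. Unset Strict Implicit. Unset Printing Implicit Defensive.
Import GRing.Theory.
Local Open Scope ring_scope.

(* Indices of ideals are 1-based natural numbers, as in the paper:
   I i j for 1 <= i, j <= d+1.  Matrix indices i : 'I_d are 0-based, so the
   paper's index of i : 'I_d is i.+1. *)

Section Defs.
Variable R : pzRingType.

Definition is_ideal (J : {pred R}) : Prop :=
  [/\ 0 \in J,
      (forall x y, x \in J -> y \in J -> x - y \in J) &
      (forall r x, x \in J -> r * x \in J /\ x * r \in J)].

(* d-system of ideals: I i j (1 <= i,j <= d+1) are two-sided ideals,
   I_ij I_jk \subset I_ik (elementwise suffices since I_ik is additively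
   closed), and I_ij = R for i >= j. *)
Definition dsystem (d : nat) (I : nat -> nat -> {pred R}) : Prop :=
  [/\ (forall i j, (1 <= i <= d.+1)%N -> (1 <= j <= d.+1)%N -> is_ideal (I i j)),
      (forall i j, (1 <= j <= i)%N -> (i <= d.+1)%N -> forall x, x \in I i j) &
      (forall i j k x y, (1 <= i <= d.+1)%N -> (1 <= j <= d.+1)%N ->
          (1 <= k <= d.+1)%N ->
          x \in I i j -> y \in I j k -> x * y \in I i k)].

(* T = (+)_{k,l} R / I_{k, d+2-l}.  An element of T is represented by a
   d x d matrix t of representatives (t k l represents the (k+1,l+1)
   component, living in R / I_{k+1, d+1-l}), up to the equivalence teq. *)
Definition teq (d : nat) (I : nat -> nat -> {pred R}) (t t' : 'M[R]_d) : Prop :=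
  forall k l : 'I_d, t k l - t' k l \in I k.+1 (d.+1 - l)%N.

(* Additive endomorphisms of T (End_Z(T)), represented by maps on
   representatives that respect teq and are additive modulo teq.
   Two such maps represent the same endomorphism iff they agree modulo teq
   at every point. *)
Definition zendo (d : nat) (I : nat -> nat -> {pred R}) (f : 'M[R]_d -> 'M[R]_d) : Prop :=
  (forall t t', teq I t t' -> teq I (f t) (f t')) /\
  (forall t t', teq I (f (t + t')) (f t + f t')).

(* A = A(R, I): element a = (a_ij) with a_ij \in I_{ij} (1-based), taken
   modulo I_{i,d+1}; we only need its representatives. *)
Definition inA (d : nat) (I : nat -> nat -> {pred R}) (a : 'M[R]_d) : Prop :=
  forall i j : 'I_d, a i j \in I i.+1 j.+1.

(* B = A(R^op, dual system): b_ij \in I_{d+2-j, d+2-i} (1-based), i.e. with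
   0-based i j : 'I_d, b i j \in I_{d+1-j, d+1-i}; taken modulo I_{1,d+2-i}. *)
Definition inB (d : nat) (I : nat -> nat -> {pred R}) (b : 'M[R]_d) : Prop :=
  forall i j : 'I_d, b i j \in I (d.+1 - j)%N (d.+1 - i)%N.

Definition actA (d : nat) (a t : 'M[R]_d) : 'M[R]_d :=
  \matrix_(i, l) \sum_j a i j * t j l.

(* Action of B on T: (b . t)_{ki} = sum_j t_kj b_ij  (mod I_{k,d+2-i}),
   i.e. x in B_ij sends r in T_kl to delta_jl (r x) in T_ki. *)
Definition actB (d : nat) (b t : 'M[R]_d) : 'M[R]_d :=
  \matrix_(k, i) \sum_j t k j * b i j.

End Defs.

From Pilot Require Import Defs.
From HB Require Import structures.
From mathcomp Require Import all_boot all_order all_algebra.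
From mathcomp Require Import zify.
Local Open Scope ring_scope.
Import GRing.Theory.
Set Implicit Arguments. Unset Strict Implicit. Unset Printing Implicit Defensive.

(* Both actions are matrix multiplications: A acts by a *m t and B by
   t *m b^T, so they commute by associativity, and each of A and B contains
   every matrix supported in the first column, since the ideals constraining
   those entries are all equal to R.  Writing
   t = \sum_l (t *m e_{l1}) *m e_{1l}, an A-linear f satisfies
   f t = t *m \sum_l e_{l1} *m f(e_{1l}), a right multiplication; the
   resulting matrix lies in B because e_{k1} *m e_{1j} = e_{kj} vanishes in T
   for k = d+2-j, so e_{k1} *m f(e_{1j}) vanishes too.  The statement for
   B-linear maps is symmetric. *)

Section Ideal.
Variables (R : pzRingType) (J : {pred R}).
Hypothesis idealJ : is_ideal J.

Lemma ideal0 : 0 \in J. Proof. by case: idealJ. Qed.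

Lemma idealB x y : x \in J -> y \in J -> x - y \in J.
Proof. by case: idealJ => _ H _; apply: H. Qed.

Lemma idealN x : x \in J -> - x \in J.
Proof. by move=> Jx; rewrite -sub0r; apply: idealB Jx; apply: ideal0. Qed.

Lemma idealD x y : x \in J -> y \in J -> x + y \in J.
Proof. by move=> Jx Jy; rewrite -[y]opprK; apply: idealB Jx (idealN Jy). Qed.

Lemma ideal_sum (T : finType) (F : T -> R) :
  (forall i, F i \in J) -> \sum_i F i \in J.
Proof. by move=> JF; apply: (big_ind [in J]); [apply: ideal0 | apply: idealD |]. Qed.

End Ideal.

Lemma sum_delta_nat (V : nmodType) n (F : 'I_n -> V) (j : 'I_n) :
  \sum_i F i *+ (i == j) = F j.
Proof. by rewrite (bigD1 j) //= eqxx big1 ?addr0 // => i /negbTE->. Qed.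

Lemma delta_mulmxE (R : pzSemiRingType) m n p (i : 'I_m) (j : 'I_n)
    (M : 'M[R]_(n, p)) x y :
  (delta_mx i j *m M) x y = M j y *+ (x == i).
Proof.
rewrite mxE (bigD1 j) //= mxE eqxx andbT big1 ?addr0 ?mulr_natl // => z /negbTE zj.
by rewrite mxE zj andbF mul0r.
Qed.

Lemma mulmx_deltaE (R : pzSemiRingType) m n p (M : 'M[R]_(m, n))
    (i : 'I_n) (j : 'I_p) x y :
  (M *m delta_mx i j) x y = M x i *+ (y == j).
Proof.
rewrite mxE (bigD1 i) //= mxE eqxx big1 ?addr0 ?mulr_natr // => z /negbTE zi.
by rewrite mxE zi mulr0.
Qed.

(* trmx_mul needs commutativity; against a matrix unit no products of
   entries are reordered. *)
Lemma trmx_mulmx_delta (R : pzSemiRingType) m n p (M : 'M[R]_(m, n))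
    (i : 'I_n) (j : 'I_p) :
  (M *m delta_mx i j)^T = delta_mx j i *m M^T.
Proof. by apply/matrixP => x y; rewrite mxE mulmx_deltaE delta_mulmxE mxE. Qed.

Lemma sum_delta_mulmxE (R : pzSemiRingType) n p (o : 'I_n)
    (M : 'I_n -> 'M[R]_(n, p)) x y :
  (\sum_l delta_mx l o *m M l) x y = M x o y.
Proof.
rewrite summxE (eq_bigr (fun l => M l o y *+ (l == x))) ?sum_delta_nat //.
by move=> l _; rewrite delta_mulmxE eq_sym.
Qed.

Lemma sum_mulmx_deltaE (R : pzSemiRingType) m n (o : 'I_m)
    (M : 'I_n -> 'M[R]_(n, m)) x y :
  (\sum_k M k *m delta_mx o k) x y = M y x o.
Proof.
rewrite summxE (eq_bigr (fun k => M k x o *+ (k == y))) ?sum_delta_nat //.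
by move=> k _; rewrite mulmx_deltaE eq_sym.
Qed.

Section DSystem.
Variables (R : pzRingType) (d : nat) (I : nat -> nat -> {pred R}).
Hypothesis dsysI : dsystem d I.

Lemma dsystem_ideal i j :
  (1 <= i <= d.+1)%N -> (1 <= j <= d.+1)%N -> is_ideal (I i j).
Proof. by case: dsysI => H _ _; apply: H. Qed.

Lemma dsystem_full i j x : (1 <= j <= i)%N -> (i <= d.+1)%N -> x \in I i j.
Proof. by case: dsysI => _ H _ ji id; apply: H. Qed.

Lemma dsystem_mul i j k x y :
  (1 <= i <= d.+1)%N -> (1 <= j <= d.+1)%N -> (1 <= k <= d.+1)%N ->
  x \in I i j -> y \in I j k -> x * y \in I i k.
Proof. by case: dsysI => _ _ H; apply: H. Qed.

Lemma teq_ideal (k l : 'I_d) : is_ideal (I k.+1 (d.+1 - l)).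
Proof. by apply: dsystem_ideal; have := ltn_ord k; have := ltn_ord l; lia. Qed.

Lemma dsystem0 i j : (i <= d)%N -> (j <= d)%N -> 0 \in I i.+1 (d.+1 - j).
Proof. by move=> id jd; apply/ideal0/dsystem_ideal; lia. Qed.

Local Notation teq := (@Defs.teq R d I).

Lemma teq_refl (t : 'M[R]_d) : teq t t.
Proof. by move=> k l; rewrite subrr; apply: ideal0 (teq_ideal k l). Qed.

Lemma teq_sym (t t' : 'M[R]_d) : teq t t' -> teq t' t.
Proof. move=> tt' k l; rewrite -opprB; exact (idealN (teq_ideal k l) (tt' k l)). Qed.

Lemma teq_trans (t1 t2 t3 : 'M[R]_d) : teq t1 t2 -> teq t2 t3 -> teq t1 t3.
Proof.
move=> t12 t23 k l; rewrite -(subrKA (t2 k l)).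
exact (idealD (teq_ideal k l) (t12 k l) (t23 k l)).
Qed.

Lemma teqD (t1 t1' t2 t2' : 'M[R]_d) :
  teq t1 t1' -> teq t2 t2' -> teq (t1 + t2) (t1' + t2').
Proof.
move=> t11 t22 k l; rewrite !mxE opprD addrACA.
exact (idealD (teq_ideal k l) (t11 k l) (t22 k l)).
Qed.

Lemma teq_sum (F G : 'I_d -> 'M[R]_d) :
  (forall l, teq (F l) (G l)) -> teq (\sum_l F l) (\sum_l G l).
Proof.
move=> FG; apply: (big_rec2 teq); first exact: teq_refl.
by move=> i x y _; apply: teqD.
Qed.

Lemma teq_dim0 (t t' : 'M[R]_d) : d = 0%N -> teq t t'.
Proof. by move=> d0 k; have := ltn_ord k; rewrite {2}d0. Qed.

Lemma teq_delta0 (k l : 'I_d) : (d <= k + l)%N -> teq (delta_mx k l) 0.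
Proof.
move=> kl x y; rewrite !mxE subr0; case: andP => [[/eqP-> /eqP->] | _].
  by apply: dsystem_full; have := ltn_ord k; have := ltn_ord l; lia.
by apply: dsystem0; have := ltn_ord x; have := ltn_ord y; lia.
Qed.

Lemma actAE (a t : 'M[R]_d) : actA a t = a *m t.
Proof. by apply/matrixP => i l; rewrite !mxE. Qed.

Lemma actBE (b t : 'M[R]_d) : actB b t = t *m b^T.
Proof. by apply/matrixP => k i; rewrite !mxE; apply: eq_bigr => j _; rewrite mxE. Qed.

Lemma mulmx_teql (a t t' : 'M[R]_d) : inA I a -> teq t t' -> teq (a *m t) (a *m t').
Proof.
move=> Aa tt' i l; rewrite !mxE -sumrB; apply: (ideal_sum (teq_ideal i l)) => j.
rewrite -mulrBr; apply: (dsystem_mul (j := j.+1)) (Aa i j) (tt' j l);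
  by have := ltn_ord i; have := ltn_ord j; have := ltn_ord l; lia.
Qed.

Lemma mulmx_teqr (b t t' : 'M[R]_d) : inB I b -> teq t t' -> teq (t *m b^T) (t' *m b^T).
Proof.
move=> Bb tt' k i; rewrite !mxE -sumrB; apply: (ideal_sum (teq_ideal k i)) => j.
rewrite !mxE -mulrBl; apply: (dsystem_mul (j := (d.+1 - j)%N)) (tt' k j) (Bb i j);
  by have := ltn_ord k; have := ltn_ord j; have := ltn_ord i; lia.
Qed.

Lemma inA0 : inA I (0 : 'M[R]_d).
Proof.
by move=> i j; rewrite mxE; apply/ideal0/dsystem_ideal;
  have := ltn_ord i; have := ltn_ord j; lia.
Qed.

Lemma inB0 : inB I (0 : 'M[R]_d).
Proof.
by move=> i j; rewrite mxE; apply/ideal0/dsystem_ideal;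
  have := ltn_ord i; have := ltn_ord j; lia.
Qed.

Section Endomorphism.
Variable f : 'M[R]_d -> 'M[R]_d.
Hypothesis endo_f : zendo I f.

Lemma zendo_teq (t t' : 'M[R]_d) : teq t t' -> teq (f t) (f t').
Proof. by case: endo_f => H _; apply: H. Qed.

Lemma zendoD (t t' : 'M[R]_d) : teq (f (t + t')) (f t + f t').
Proof. by case: endo_f => _ H; apply: H. Qed.

Lemma zendo0 : teq (f 0) 0.
Proof.
move=> k l; have := zendoD 0 0 k l.
rewrite addr0 !mxE subr0 opprD addrA subrr add0r => /(idealN (teq_ideal k l)).
by rewrite opprK.
Qed.

Lemma zendo_teq0 (t : 'M[R]_d) : teq t 0 -> teq (f t) 0.
Proof. by move=> /zendo_teq/teq_trans; apply; apply: zendo0. Qed.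

Lemma zendo_sum (F : 'I_d -> 'M[R]_d) : teq (f (\sum_l F l)) (\sum_l f (F l)).
Proof.
apply: (big_rec2 (fun x y => teq (f x) y)); first exact: zendo0.
move=> i x y _ fxy; apply: teq_trans (zendoD _ _) _.
exact: teqD (teq_refl _) fxy.
Qed.

Definition A_linear :=
  forall a, inA I a -> forall t, teq (f (actA a t)) (actA a (f t)).

Definition B_linear :=
  forall b, inB I b -> forall t, teq (f (actB b t)) (actB b (f t)).

Lemma A_linear_mulmx : A_linear ->
  forall a, inA I a -> forall t, teq (f (a *m t)) (a *m f t).
Proof. by move=> linf a Aa t; rewrite -!actAE; apply: linf. Qed.

Lemma B_linear_mulmx : B_linear ->
  forall b, inB I b -> forall t, teq (f (t *m b^T)) (f t *m b^T).
Proof. by move=> linf b Bb t; rewrite -!actBE; apply: linf. Qed.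

Lemma actB_A_linear (b : 'M[R]_d) :
  inB I b -> (forall t, teq (f t) (actB b t)) -> A_linear.
Proof.
move=> Bb fb a Aa t; apply: teq_trans (fb _) _.
rewrite !actAE !actBE -mulmxA.
by apply: mulmx_teql Aa _; apply: teq_sym; rewrite -actBE.
Qed.

Lemma actA_B_linear (a : 'M[R]_d) :
  inA I a -> (forall t, teq (f t) (actA a t)) -> B_linear.
Proof.
move=> Aa fa b Bb t; apply: teq_trans (fa _) _.
rewrite !actAE !actBE mulmxA.
by apply: mulmx_teqr Bb _; apply: teq_sym; rewrite -actAE.
Qed.

Section FirstColumn.
Variable o : 'I_d.
Hypothesis o_eq0 : o = 0%N :> nat.

Lemma inA_mulmx_delta (M : 'M[R]_d) (l : 'I_d) : inA I (M *m delta_mx l o).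
Proof.
move=> x y; rewrite mulmx_deltaE; case: eqP => [-> | _]; last first.
  by apply/ideal0/dsystem_ideal; have := ltn_ord x; have := ltn_ord y; lia.
by apply: dsystem_full; have := ltn_ord x; lia.
Qed.

Lemma inB_mulmx_delta (M : 'M[R]_d) (l : 'I_d) : inB I (M *m delta_mx l o).
Proof.
move=> x y; rewrite mulmx_deltaE; case: eqP => [-> | _]; last first.
  by apply/ideal0/dsystem_ideal; have := ltn_ord x; have := ltn_ord y; lia.
by apply: dsystem_full; have := ltn_ord x; lia.
Qed.

Lemma A_linear_row_in : A_linear ->
  forall i j : 'I_d, f (delta_mx o j) o i \in I (d.+1 - j) (d.+1 - i).
Proof.
move=> linf i j; have [j0 | j_gt0] := posnP j.
  by rewrite j0 subn0; apply: dsystem_full; have := ltn_ord i; lia.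
have kd : (d - j < d)%N by have := ltn_ord j; lia.
pose k := Ordinal kd.
have Ak : inA I (delta_mx k o) by rewrite -[delta_mx k o]mul1mx; apply: inA_mulmx_delta.
have kj0 : teq (delta_mx k o *m delta_mx o j) 0.
  by rewrite mul_delta_mx; apply: teq_delta0; rewrite /=; have := ltn_ord j; lia.
have kfj0 : teq (delta_mx k o *m f (delta_mx o j)) 0.
  have := A_linear_mulmx linf Ak (delta_mx o j).
  by move=> /teq_sym/teq_trans; apply; apply: zendo_teq0.
have := kfj0 k i; rewrite delta_mulmxE eqxx mulr1n mxE subr0.
by have -> : (k.+1 = d.+1 - j)%N by rewrite /=; have := ltn_ord j; lia.
Qed.

Lemma A_linear_mulmxr : A_linear ->
  forall t, teq (f t) (t *m \sum_l delta_mx l o *m f (delta_mx o l)).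
Proof.
move=> linf t.
have tE : t = \sum_l (t *m delta_mx l o) *m delta_mx o l.
  rewrite (eq_bigr (fun l => t *m delta_mx l l)) => [|l _]; last first.
    by rewrite -mulmxA mul_delta_mx.
  by rewrite -mulmx_sumr -mx1_sum_delta mulmx1.
rewrite {1}tE; apply: teq_trans (zendo_sum _) _.
have := teq_sum (fun l => A_linear_mulmx linf (inA_mulmx_delta t l) (delta_mx o l)).
move=> /teq_trans; apply.
rewrite mulmx_sumr (eq_bigr _ (fun l _ => mulmxA _ _ _)); exact: teq_refl.
Qed.

Lemma B_linear_col_in : B_linear ->
  forall x k : 'I_d, f (delta_mx k o) x o \in I x.+1 k.+1.
Proof.
move=> linf x k; have [k0 | k_gt0] := posnP k.
  by rewrite k0; apply: dsystem_full; have := ltn_ord x; lia.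
have jd : (d - k < d)%N by have := ltn_ord k; lia.
pose j := Ordinal jd.
have Bj : inB I (delta_mx j o) by rewrite -[delta_mx j o]mul1mx; apply: inB_mulmx_delta.
have kj0 : teq (delta_mx k o *m delta_mx o j) 0.
  by rewrite mul_delta_mx; apply: teq_delta0; rewrite /=; have := ltn_ord k; lia.
have fkj0 : teq (f (delta_mx k o) *m delta_mx o j) 0.
  have := B_linear_mulmx linf Bj (delta_mx k o); rewrite trmx_delta.
  by move=> /teq_sym/teq_trans; apply; apply: zendo_teq0.
have := fkj0 x j; rewrite mulmx_deltaE eqxx mulr1n mxE subr0.
by have -> : (d.+1 - j = k.+1)%N by rewrite /=; have := ltn_ord k; lia.
Qed.

Lemma B_linear_mulmxl : B_linear ->
  forall t, teq (f t) ((\sum_k f (delta_mx k o) *m delta_mx o k) *m t).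
Proof.
move=> linf t.
have tE : t = \sum_k delta_mx k o *m (t^T *m delta_mx k o)^T.
  rewrite (eq_bigr (fun k => delta_mx k k *m t)) => [|k _]; last first.
    by rewrite trmx_mulmx_delta trmxK mulmxA mul_delta_mx.
  by rewrite -mulmx_suml -mx1_sum_delta mul1mx.
rewrite {1}tE; apply: teq_trans (zendo_sum _) _.
have := teq_sum (fun k => B_linear_mulmx linf (inB_mulmx_delta t^T k) (delta_mx k o)).
move=> /teq_trans; apply.
rewrite mulmx_suml; apply: teq_sum => k.
by rewrite trmx_mulmx_delta trmxK mulmxA; apply: teq_refl.
Qed.

End FirstColumn.

Lemma A_linear_iff :
  A_linear <-> exists b, inB I b /\ forall t, teq (f t) (actB b t).
Proof.
split=> [linf | [b [Bb fb]]]; last exact: actB_A_linear Bb fb.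
have [d0 | d_gt0] := posnP d.
  by exists 0; split=> [|t]; [apply: inB0 | apply: teq_dim0].
pose o := Ordinal d_gt0.
exists (\sum_l delta_mx l o *m f (delta_mx o l))^T; split=> [i j | t].
  by rewrite mxE sum_delta_mulmxE; apply: A_linear_row_in.
by rewrite actBE trmxK; apply: A_linear_mulmxr.
Qed.

Lemma B_linear_iff :
  B_linear <-> exists a, inA I a /\ forall t, teq (f t) (actA a t).
Proof.
split=> [linf | [a [Aa fa]]]; last exact: actA_B_linear Aa fa.
have [d0 | d_gt0] := posnP d.
  by exists 0; split=> [|t]; [apply: inA0 | apply: teq_dim0].
pose o := Ordinal d_gt0.
exists (\sum_k f (delta_mx k o) *m delta_mx o k); split=> [x k | t].
  by rewrite sum_mulmx_deltaE; apply: B_linear_col_in.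
by rewrite actAE; apply: B_linear_mulmxl.
Qed.

End Endomorphism.
End DSystem.

Theorem proposition4p2 (R : pzRingType) (d : nat) (I : nat -> nat -> {pred R}) :
  dsystem d I ->
  (forall f : 'M[R]_d -> 'M[R]_d, zendo I f ->
     ((forall a, inA I a -> forall t, teq I (f (actA a t)) (actA a (f t))) <->
      (exists b, inB I b /\ forall t, teq I (f t) (actB b t))))
  /\
  (forall f : 'M[R]_d -> 'M[R]_d, zendo I f ->
     ((forall b, inB I b -> forall t, teq I (f (actB b t)) (actB b (f t))) <->
      (exists a, inA I a /\ forall t, teq I (f t) (actA a t)))).
Proof.
by move=> dsysI; split=> f endo_f; [apply: A_linear_iff | apply: B_linear_iff].
Qed.
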